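(* Let $n\ge 2$ be an integer that is not a perfect square, and let $a,b$ be positive integers with $a^2-nb^2=1$. Put $u=a+b\sqrt n$, and let $h_j/k_j$ ($j\ge0$) be the convergents of the simple continued fraction expansion of $u$. Then $$\mathcal L\left(\frac1{u^2}\right)=\sum_{k=1}^{\infty}\mathcal L\left(\frac{1}{h_{2k-1}^2}\right).$$
   Context: $\mathcal L$ is the Rogers dilogarithm: for real $z\le1$, $\mathcal L(z)=\mathrm{Li}_2(z)+\tfrac12\log|z|\log(1-z)$, where $\mathrm{Li}_2(z)=\sum_{m\ge1}z^m/m^2$. If $u=[c_0,c_1,c_2,\dots]$ is the simple continued fraction expansion of $u$ ($c_0=\lfloor u\rfloor$, $c_i\ge1$ integers), the numerators and denominators of convergents are defined by $h_{-2}=0,h_{-1}=1,k_{-2}=1,k_{-1}=0$ and $h_i=c_ih_{i-1}+h_{i-2}$, $k_i=c_ik_{i-1}+k_{i-2}$ for $i\ge0$, so that $[c_0,\dots,c_i]=h_i/k_i$. *)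

From Stdlib Require Import Reals Lra Lia ZArith ClassicalEpsilon.
Open Scope R_scope.

(* The limit of a real sequence (chosen by epsilon; meaningful when the
   sequence converges, which is the case for all uses below). *)
Definition seq_lim (s : nat -> R) : R :=
  epsilon (inhabits 0) (fun l => Un_cv s l).

Definition Li2 (z : R) : R :=
  seq_lim (fun N => sum_f_R0 (fun m => z ^ (S m) / (INR (S m)) ^ 2) N).

Definition RogersL (z : R) : R :=
  Li2 z + / 2 * ln (Rabs z) * ln (1 - z).

Definition floorR (x : R) : Z := (up x - 1)%Z.

Fixpoint cf_rem (u : R) (i : nat) : R :=
  match i with
  | O => u
  | S j => / (cf_rem u j - IZR (floorR (cf_rem u j)))
  end.

Definition cf_coef (u : R) (i : nat) : Z := floorR (cf_rem u i).

(* cf_hk u m = ((h_{m-2}, h_{m-1}), (k_{m-2}, k_{m-1})) *)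
Fixpoint cf_hk (u : R) (m : nat) : (Z * Z) * (Z * Z) :=
  match m with
  | O => ((0%Z, 1%Z), (1%Z, 0%Z))
  | S i =>
      let '((h2, h1), (k2, k1)) := cf_hk u i in
      ((h1, (cf_coef u i * h1 + h2)%Z), (k1, (cf_coef u i * k1 + k2)%Z))
  end.

Definition cf_h (u : R) (i : nat) : Z := snd (fst (cf_hk u (S i))).
Definition cf_k (u : R) (i : nat) : Z := snd (snd (cf_hk u (S i))).

(* On (0,1), Li_2 is the power series sum z^m/m^2, whose
   derivative is -ln(1-x)/x; this gives L'(x) and the limit L(0+) = 0.  Abel's
   five-term relation L(x) + L(y) = L(xy) + L(x(1-y)/(1-xy)) + L(y(1-x)/(1-xy))
   follows because the x-derivative of the difference vanishes and its limit as
   x -> 0 is L(y) - L(y).  Applied at suitable points, the relation makes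
   L(T(w)), with T(w) = w(1-q)^2/(1-qw)^2, a difference of a potential at w and
   at qw, so the series sum_{k >= 1} L(T(q^k)) telescopes to L(q).

   Since u + 1/u = 2a, the continued fraction of u is
   [2a-1; 1, 2a-2, 1, 2a-2, ...], and h_{2k+1} = U_{k+2}, where U is the Lucas
   sequence U_0 = 0, U_1 = 1, U_{j+2} = 2a U_{j+1} - U_j.  With x = 1/u,
   U_{k+2} x^(k+1) (1-x^2) = 1 - x^(2k+4), which says exactly that
   T(q^(k+1)) = 1/U_{k+2}^2 for q = x^2 = 1/u^2.  The theorem is then the
   telescoping series at q = 1/u^2. *)

From Stdlib Require Import Reals ZArith Lra Lia ClassicalEpsilon.
From Coquelicot Require Import Coquelicot.
Open Scope R_scope.

Lemma seq_lim_eq (s : nat -> R) (l : R) : Un_cv s l -> seq_lim s = l.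
Proof.
  intros Hs. unfold seq_lim.
  apply (UL_sequence s); [|exact Hs].
  exact (epsilon_spec (inhabits 0) (fun l => Un_cv s l) (ex_intro _ l Hs)).
Qed.

Lemma Un_cv_const (c : R) : Un_cv (fun _ => c) c.
Proof.
  intros e He. exists 0%nat. intros k _.
  unfold R_dist. rewrite Rminus_diag, Rabs_R0. exact He.
Qed.

Lemma Un_cv_shift (s : nat -> R) (l : R) : Un_cv s l -> Un_cv (fun k => s (S k)) l.
Proof.
  intros Hs e He. destruct (Hs e He) as [N HN].
  exists N. intros k Hk. apply HN. lia.
Qed.

Lemma pow_S_range (q : R) (k : nat) : 0 < q < 1 -> 0 < q ^ S k < 1.
Proof. intros Hq. split; [apply pow_lt; lra | apply pow_lt_1_compat; [lra | lia]]. Qed.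

Lemma pow_S_cv0 (q : R) : 0 < q < 1 -> Un_cv (fun k => q ^ S k) 0.
Proof.
  intros Hq e He.
  destruct (pow_lt_1_zero q ltac:(rewrite Rabs_right; lra) e He) as [N HN].
  exists N. intros k Hk. unfold R_dist. rewrite Rminus_0_r. apply HN. lia.
Qed.

Lemma is_derive_continuity_pt (f : R -> R) (x l : R) :
  is_derive f x l -> continuity_pt f x.
Proof.
  intros Hf. apply continuity_pt_filterlim.
  apply (ex_derive_continuous f). exists l. exact Hf.
Qed.

Lemma derive_zero_const (f : R -> R) (lo hi x1 x2 : R) :
  (forall t, lo < t < hi -> is_derive f t 0) ->
  lo < x1 < hi -> lo < x2 < hi -> f x1 = f x2.
Proof.
  intros Hf H1 H2.
  assert (Hin : forall t, Rmin x1 x2 <= t <= Rmax x1 x2 -> lo < t < hi).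
  { intros t [Ht1 Ht2]. unfold Rmin, Rmax in *. destruct (Rle_dec x1 x2); lra. }
  destruct (MVT_gen f x1 x2 (fun _ => 0)) as [c [_ Hc]].
  - intros t Ht. apply Hf, Hin. lra.
  - intros t Ht. apply (is_derive_continuity_pt f t 0), Hf, Hin, Ht.
  - lra.
Qed.

Definition li2_coef (m : nat) : R :=
  match m with O => 0 | S k => / INR (S k) ^ 2 end.

Lemma INR_S_pos (k : nat) : 0 < INR (S k).
Proof. rewrite S_INR. pose proof (pos_INR k). lra. Qed.

(* The coefficients are bounded, so the radius of convergence is at least 1. *)
Lemma li2_radius : Rbar_le 1 (CV_radius li2_coef).
Proof.
  apply (proj1 (CV_radius_bounded li2_coef)).
  exists 1. intros [|k]; rewrite pow1, Rmult_1_r; cbn [li2_coef].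
  - rewrite Rabs_R0. lra.
  - pose proof (INR_S_pos k).
    assert (1 <= INR (S k) ^ 2) by (rewrite <- (pow1 2); apply pow_incr; rewrite S_INR;
                                     pose proof (pos_INR k); lra).
    rewrite Rabs_right by (left; apply Rinv_0_lt_compat, pow_lt; lra).
    rewrite <- Rinv_1. apply Rinv_le_contravar; lra.
Qed.

Lemma inside_li2_radius (z : R) : Rabs z < 1 -> Rbar_lt (Rabs z) (CV_radius li2_coef).
Proof. intros Hz. eapply Rbar_lt_le_trans; [|apply li2_radius]. exact Hz. Qed.

Lemma Li2_PSeries (z : R) : Rabs z < 1 -> Li2 z = PSeries li2_coef z.
Proof.
  intros Hz. unfold Li2. apply seq_lim_eq.
  assert (Hs := PSeries_correct li2_coef z (CV_radius_inside _ _ (inside_li2_radius z Hz))).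
  apply is_pseries_R, is_series_Reals in Hs.
  assert (Hpart : forall N, sum_f_R0 (fun m => z ^ S m / INR (S m) ^ 2) N
                            = sum_f_R0 (fun k => li2_coef k * z ^ k) (S N)).
  { induction N as [|N IH].
    - simpl. unfold Rdiv. ring.
    - rewrite tech5, IH, (tech5 _ (S N)). cbn [li2_coef]. unfold Rdiv. ring. }
  intros e He. destruct (Hs e He) as [N HN].
  exists N. intros k Hk. rewrite Hpart. apply HN. lia.
Qed.

Lemma Li2_derive (x : R) : Rabs x < 1 ->
  is_derive Li2 x (PSeries (PS_derive li2_coef) x).
Proof.
  intros Hx. apply (is_derive_ext_loc (PSeries li2_coef)).
  - assert (He : 0 < 1 - Rabs x) by lra.
    exists (mkposreal _ He). intros y Hy. symmetry. apply Li2_PSeries.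
    unfold ball in Hy; simpl in Hy;
      unfold AbsRing_ball, abs, minus, plus, opp in Hy; simpl in Hy.
    pose proof (Rabs_triang_inv y x). unfold Rminus in *. lra.
  - apply is_derive_PSeries, inside_li2_radius, Hx.
Qed.

Lemma PS_derive_li2_coef (k : nat) : PS_derive li2_coef k = / INR (S k).
Proof.
  unfold PS_derive. cbn [li2_coef].
  pose proof (INR_S_pos k). field. lra.
Qed.

Lemma derived_radius (z : R) : Rabs z < 1 ->
  Rbar_lt (Rabs z) (CV_radius (PS_derive li2_coef)).
Proof. intros Hz. rewrite CV_radius_derive. apply inside_li2_radius, Hz. Qed.

Lemma geometric_PSeries (x : R) : Rabs x < 1 -> PSeries (fun _ => 1) x = / (1 - x).
Proof.
  intros Hx. apply is_pseries_unique, is_pseries_R.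
  eapply is_series_ext; [|apply (is_series_geom x Hx)].
  intros k. simpl. ring.
Qed.

(* The derived series sum_{m >= 0} x^m / (m+1) is -ln(1-x)/x: the series
   sum_{m >= 1} x^m / m has derivative 1/(1-x) and vanishes at 0. *)
Lemma log_series (x : R) : Rabs x < 1 ->
  x * PSeries (PS_derive li2_coef) x = - ln (1 - x).
Proof.
  intros Hx.
  set (g := PS_incr_1 (PS_derive li2_coef)).
  assert (Hg : forall k, PS_derive g k = 1).
  { intros k. unfold PS_derive at 1, g. cbn [PS_incr_1].
    rewrite PS_derive_li2_coef. pose proof (INR_S_pos k). field. lra. }
  assert (Hder : forall t, -1 < t < 1 -> is_derive (fun t => PSeries g t + ln (1 - t)) t 0).
  { intros t Ht.
    assert (Ht1 : Rabs t < 1) by (apply Rabs_def1; lra).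
    replace 0 with (/ (1 - t) + - / (1 - t)) by ring.
    apply (is_derive_plus (PSeries g) (fun t => ln (1 - t))).
    - rewrite <- geometric_PSeries by exact Ht1.
      erewrite PSeries_ext; [|intros k; symmetry; apply Hg].
      apply is_derive_PSeries. unfold g. rewrite CV_radius_incr_1.
      apply derived_radius, Ht1.
    - auto_derive; [lra|]. field. lra. }
  assert (Hconst := derive_zero_const _ (-1) 1 x 0 Hder
                      ltac:(apply Rabs_def2 in Hx; lra) ltac:(lra)).
  cbv beta in Hconst. unfold g in Hconst.
  rewrite PSeries_incr_1, PSeries_0, Rminus_0_r, ln_1 in Hconst.
  simpl in Hconst. unfold zero in Hconst. simpl in Hconst. lra.
Qed.

Definition RogersL_der (x : R) : R := - / 2 * (ln (1 - x) / x + ln x / (1 - x)).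

(* L' = Li_2' + (ln t ln(1-t))'/2, with Li_2'(x) = -ln(1-x)/x from [log_series]. *)
Lemma RogersL_derive (x : R) : 0 < x < 1 -> is_derive RogersL x (RogersL_der x).
Proof.
  intros Hx.
  assert (Hx1 : Rabs x < 1) by (rewrite Rabs_right; lra).
  apply (is_derive_ext_loc (fun t => Li2 t + / 2 * ln t * ln (1 - t))).
  - assert (He : 0 < x) by lra.
    exists (mkposreal _ He). intros y Hy.
    unfold ball in Hy; simpl in Hy;
      unfold AbsRing_ball, abs, minus, plus, opp in Hy; simpl in Hy.
    apply Rabs_def2 in Hy. unfold RogersL. rewrite (Rabs_right y) by lra. reflexivity.
  - assert (HLi2 : PSeries (PS_derive li2_coef) x = - ln (1 - x) / x).
    { rewrite <- log_series by exact Hx1. field. lra. }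
    replace (RogersL_der x)
      with (PSeries (PS_derive li2_coef) x + / 2 * (/ x * ln (1 - x) + ln x * (- / (1 - x))))
      by (rewrite HLi2; unfold RogersL_der; field; lra).
    apply (is_derive_plus Li2 (fun t => / 2 * ln t * ln (1 - t))).
    + apply Li2_derive, Hx1.
    + auto_derive; [lra|]. unfold Rminus. field. lra.
Qed.

Lemma RogersL_continuity (x : R) : 0 < x < 1 -> continuity_pt RogersL x.
Proof. intros Hx. apply (is_derive_continuity_pt _ _ _ (RogersL_derive x Hx)). Qed.

(* |t ln t| <= 2 sqrt t on (0,1), from ln s < s at s = 1/sqrt t. *)
Lemma xlnx_bound (t : R) : 0 < t < 1 -> Rabs (t * ln t) <= 2 * sqrt t.
Proof.
  intros Ht.
  assert (Hs : 0 < sqrt t) by (apply sqrt_lt_R0; lra).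
  assert (Hss := sqrt_sqrt t (Rlt_le _ _ (proj1 Ht))).
  assert (Hneg : ln t < 0) by (rewrite <- ln_1; apply ln_increasing; lra).
  assert (Hlnt : ln t = - 2 * ln (/ sqrt t)).
  { rewrite ln_Rinv by exact Hs. rewrite <- Hss at 1. rewrite ln_mult by lra. ring. }
  assert (Hlt : ln (/ sqrt t) < / sqrt t).
  { pose proof (exp_ineq1_le (ln (/ sqrt t))) as He.
    rewrite exp_ln in He by (apply Rinv_0_lt_compat, Hs). lra. }
  rewrite Rabs_left by nra.
  apply (Rle_trans _ (t * (2 / sqrt t))).
  - rewrite Ropp_mult_distr_r. apply Rmult_le_compat_l; unfold Rdiv; lra.
  - right. rewrite <- Hss at 1. field. lra.
Qed.

Lemma xlnx_cv0 (t : nat -> R) : (forall k, 0 < t k < 1) -> Un_cv t 0 ->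
  Un_cv (fun k => t k * ln (t k)) 0.
Proof.
  intros Ht Hc.
  assert (Hs := continuity_seq sqrt t 0 (continuity_pt_sqrt 0 (Rle_refl 0)) Hc).
  rewrite sqrt_0 in Hs.
  intros e He. destruct (Hs (e / 2)) as [N HN]; [lra|].
  exists N. intros k Hk. specialize (HN k Hk). unfold R_dist in *.
  rewrite Rminus_0_r in *. pose proof (xlnx_bound _ (Ht k)).
  rewrite Rabs_right in HN by (apply Rle_ge, sqrt_pos). lra.
Qed.

(* L(t) -> 0 as t -> 0+: Li_2(t) -> Li_2(0) = 0 and ln t ln(1-t) = -(t ln t) Li_2'(t) -> 0. *)
Lemma RogersL_cv0 (t : nat -> R) : (forall k, 0 < t k < 1) -> Un_cv t 0 ->
  Un_cv (fun k => RogersL (t k)) 0.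
Proof.
  intros Ht Hc.
  assert (Habs : forall k, Rabs (t k) < 1).
  { intros k. specialize (Ht k). rewrite Rabs_right; lra. }
  assert (Hin0 : Rabs 0 < 1) by (rewrite Rabs_R0; lra).
  assert (HLi2 : Un_cv (fun k => PSeries li2_coef (t k)) 0).
  { replace 0 with (PSeries li2_coef 0) by (rewrite PSeries_0; reflexivity).
    apply continuity_seq; [|exact Hc].
    apply PSeries_continuity, inside_li2_radius, Hin0. }
  assert (Hder : Un_cv (fun k => PSeries (PS_derive li2_coef) (t k))
                       (PSeries (PS_derive li2_coef) 0)).
  { apply continuity_seq; [|exact Hc].
    apply PSeries_continuity, derived_radius, Hin0. }
  assert (Hsum := CV_plus _ _ _ _ HLi2
            (CV_mult _ _ _ _ (Un_cv_const (- / 2)) (CV_mult _ _ _ _ (xlnx_cv0 t Ht Hc) Hder))).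
  replace 0 with (0 + - / 2 * (0 * PSeries (PS_derive li2_coef) 0)) by ring.
  eapply Un_cv_ext; [|exact Hsum].
  intros k. cbv beta. unfold RogersL.
  rewrite Li2_PSeries by apply Habs.
  rewrite Rabs_right by (specialize (Ht k); lra).
  replace (ln (1 - t k)) with (- (t k * PSeries (PS_derive li2_coef) (t k)))
    by (rewrite log_series by apply Habs; ring).
  ring.
Qed.

Lemma RogersL_comp_derive (g : R -> R) (x dg : R) :
  0 < g x < 1 -> is_derive g x dg ->
  is_derive (fun t => RogersL (g t)) x (dg * RogersL_der (g x)).
Proof.
  intros Hg Hdg. exact (is_derive_comp RogersL g x _ dg (RogersL_derive _ Hg) Hdg).
Qed.

(* The arguments x(1-y)/(1-xy) occurring in Abel's five-term relation. *)
Definition abel (x y : R) : R := x * (1 - y) / (1 - x * y).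

Lemma abel_range (x y : R) : 0 < x < 1 -> 0 < y < 1 -> 0 < abel x y < 1.
Proof.
  intros Hx Hy. unfold abel. assert (0 < 1 - x * y) by nra.
  split.
  - apply Rdiv_lt_0_compat; nra.
  - apply (Rmult_lt_reg_r (1 - x * y)); [lra|].
    unfold Rdiv. rewrite Rmult_assoc, Rinv_l by lra. nra.
Qed.

Lemma one_minus_abel (x y : R) : 0 < x < 1 -> 0 < y < 1 ->
  1 - abel x y = (1 - x) / (1 - x * y).
Proof. intros Hx Hy. unfold abel. field. nra. Qed.

Lemma RogersL_der_abel (x y : R) : 0 < x < 1 -> 0 < y < 1 ->
  RogersL_der (abel x y) =
  - / 2 * ((ln (1 - x) - ln (1 - x * y)) / abel x y
           + (ln x + ln (1 - y) - ln (1 - x * y)) / (1 - abel x y)).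
Proof.
  intros Hx Hy. assert (Hxy : 0 < 1 - x * y) by nra.
  assert (Hln : ln (abel x y) = ln x + ln (1 - y) - ln (1 - x * y)).
  { unfold abel. rewrite ln_div, ln_mult by nra. ring. }
  assert (Hln1 : ln (1 - abel x y) = ln (1 - x) - ln (1 - x * y)).
  { rewrite one_minus_abel, ln_div by lra. reflexivity. }
  unfold RogersL_der. rewrite Hln, Hln1. ring.
Qed.

Lemma five_term_der_cancel (x y : R) : 0 < x < 1 -> 0 < y < 1 ->
  RogersL_der x - y * RogersL_der (x * y)
  - (1 - y) / (1 - x * y) ^ 2 * RogersL_der (abel x y)
  - y * (y - 1) / (1 - y * x) ^ 2 * RogersL_der (abel y x) = 0.
Proof.
  intros Hx Hy. assert (Hxy : 0 < 1 - x * y) by nra.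
  rewrite (RogersL_der_abel x y), (RogersL_der_abel y x), one_minus_abel, one_minus_abel
    by assumption.
  replace (y * x) with (x * y) by ring.
  unfold RogersL_der. rewrite ln_mult by lra.
  unfold abel. field. repeat split; nra.
Qed.

Lemma abel_cv_left (t : nat -> R) (y : R) : Un_cv t 0 ->
  Un_cv (fun k => abel (t k) y) 0.
Proof.
  intros Hc.
  assert (Hcont : continuity_pt (fun s => abel s y) 0).
  { apply continuity_pt_filterlim, (ex_derive_continuous (fun s => abel s y)).
    unfold abel. auto_derive. lra. }
  pose proof (continuity_seq _ t 0 Hcont Hc) as Hlim. cbv beta in Hlim.
  replace (abel 0 y) with 0 in Hlim by (unfold abel; field; lra). exact Hlim.
Qed.

Lemma abel_cv_right (t : nat -> R) (y : R) : Un_cv t 0 ->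
  Un_cv (fun k => abel y (t k)) y.
Proof.
  intros Hc.
  assert (Hcont : continuity_pt (abel y) 0).
  { apply continuity_pt_filterlim, (ex_derive_continuous (abel y)).
    unfold abel. auto_derive. lra. }
  pose proof (continuity_seq _ t 0 Hcont Hc) as Hlim. cbv beta in Hlim.
  replace (abel y 0) with y in Hlim by (unfold abel; field; lra). exact Hlim.
Qed.

Section FiveTerm.
Variable y : R.
Hypothesis Hy : 0 < y < 1.

Definition five_term_defect (x : R) : R :=
  RogersL x + RogersL y - RogersL (x * y) - RogersL (abel x y) - RogersL (abel y x).

Lemma five_term_defect_derive (x : R) : 0 < x < 1 -> is_derive five_term_defect x 0.
Proof.
  intros Hx. assert (Hxy : 0 < 1 - x * y) by nra.
  assert (Dxy : is_derive (fun t => RogersL (t * y)) x (y * RogersL_der (x * y))).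
  { apply (RogersL_comp_derive (fun t => t * y)); [nra|]. auto_derive; [exact I|ring]. }
  assert (Dabel_l : is_derive (fun t => RogersL (abel t y)) x
                      ((1 - y) / (1 - x * y) ^ 2 * RogersL_der (abel x y))).
  { apply (RogersL_comp_derive (fun t => abel t y)); [apply abel_range; lra|].
    unfold abel. auto_derive; [lra|]. field. lra. }
  assert (Dabel_r : is_derive (fun t => RogersL (abel y t)) x
                      (y * (y - 1) / (1 - y * x) ^ 2 * RogersL_der (abel y x))).
  { apply (RogersL_comp_derive (abel y)); [apply abel_range; lra|].
    unfold abel. auto_derive; [nra|]. field. nra. }
  rewrite <- (five_term_der_cancel x y Hx Hy).
  unfold five_term_defect.
  apply (is_derive_minus _ (fun t => RogersL (abel y t))); [|exact Dabel_r].
  apply (is_derive_minus _ (fun t => RogersL (abel t y))); [|exact Dabel_l].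
  rewrite <- (Rplus_0_r (RogersL_der x)).
  apply (is_derive_minus _ (fun t => RogersL (t * y))); [|exact Dxy].
  apply (is_derive_plus RogersL (fun _ => RogersL y)).
  - apply RogersL_derive, Hx.
  - exact (is_derive_const (RogersL y) x).
Qed.

(* The defect is constant on (0,1) and tends to L(y) - L(y) = 0 at 0. *)
Lemma five_term_defect_zero (x : R) : 0 < x < 1 -> five_term_defect x = 0.
Proof.
  intros Hx.
  set (t := fun k : nat => (/ 2) ^ S k).
  assert (Ht : forall k, 0 < t k < 1) by (intros k; apply pow_S_range; lra).
  assert (Hc : Un_cv t 0) by (apply pow_S_cv0; lra).
  assert (Hty : forall k, 0 < t k * y < 1) by (intros k; specialize (Ht k); split; nra).
  assert (Lx := RogersL_cv0 t Ht Hc).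
  assert (Lxy := RogersL_cv0 (fun k => t k * y) Hty
     ltac:(replace 0 with (0 * y) by ring; apply CV_mult; [exact Hc | apply Un_cv_const])).
  assert (Label_l := RogersL_cv0 (fun k => abel (t k) y)
                    (fun k => abel_range _ _ (Ht k) Hy) (abel_cv_left t y Hc)).
  assert (Label_r := continuity_seq RogersL _ _ (RogersL_continuity y Hy)
                       (abel_cv_right t y Hc)).
  assert (Hlim := CV_minus _ _ _ _ (CV_minus _ _ _ _ (CV_minus _ _ _ _
                    (CV_plus _ _ _ _ Lx (Un_cv_const (RogersL y))) Lxy) Label_l) Label_r).
  assert (Hconst : Un_cv (fun k => five_term_defect (t k)) (five_term_defect x)).
  { eapply Un_cv_ext; [|apply Un_cv_const].
    intros k. cbv beta.
    apply (derive_zero_const five_term_defect 0 1);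
      [exact five_term_defect_derive | exact Hx | apply Ht]. }
  apply (UL_sequence _ _ _ Hconst).
  replace 0 with (0 + RogersL y - 0 - 0 - RogersL y) by ring.
  exact Hlim.
Qed.
End FiveTerm.

Theorem five_term (x y : R) : 0 < x < 1 -> 0 < y < 1 ->
  RogersL x + RogersL y = RogersL (x * y) + RogersL (abel x y) + RogersL (abel y x).
Proof.
  intros Hx Hy. pose proof (five_term_defect_zero y Hy x Hx) as H.
  unfold five_term_defect in H. lra.
Qed.

Section Telescope.
Variable q : R.
Hypothesis Hq : 0 < q < 1.

Definition tele_term (w : R) : R := w * (1 - q) ^ 2 / (1 - q * w) ^ 2.

Definition tele_potential (w : R) : R := RogersL (abel w q) - RogersL (abel q w).

(* The five-term relation at x = abel w q, y = abel q (q w), for which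
   xy = abel (q w) q, abel x y = T(w) and abel y x = abel q w. *)
Lemma tele_step (w : R) : 0 < w < 1 ->
  RogersL (tele_term w) = tele_potential w - tele_potential (q * w).
Proof.
  intros Hw.
  assert (Hqw : 0 < q * w < 1) by (split; nra).
  assert (Hden1 : 0 < 1 - q * w) by nra.
  assert (Hden2 : 0 < 1 - q * (q * w)) by nra.
  assert (Hprod : abel w q * abel q (q * w) = abel (q * w) q) by (unfold abel; field; lra).
  assert (Hnz : 1 - abel (q * w) q <> 0) by (pose proof (abel_range (q * w) q Hqw Hq); lra).
  rewrite one_minus_abel in Hnz by assumption.
  assert (Hleft : abel (abel w q) (abel q (q * w)) = tele_term w).
  { unfold abel at 1. rewrite Hprod. unfold abel, tele_term. field. repeat split; nra. }
  assert (Hright : abel (abel q (q * w)) (abel w q) = abel q w).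
  { unfold abel at 1. rewrite (Rmult_comm (abel q (q * w)) (abel w q)), Hprod.
    unfold abel. field. repeat split; nra. }
  pose proof (five_term (abel w q) (abel q (q * w)) (abel_range w q Hw Hq)
                (abel_range q (q * w) Hq Hqw)) as Hfive.
  rewrite Hprod, Hleft, Hright in Hfive.
  unfold tele_potential. lra.
Qed.

Lemma tele_partial_sum (N : nat) :
  sum_f_R0 (fun k => RogersL (tele_term (q ^ S k))) N
  = tele_potential q - tele_potential (q ^ S (S N)).
Proof.
  induction N as [|N IH].
  - cbn [sum_f_R0]. rewrite tele_step by (apply (pow_S_range q 0 Hq)).
    replace (q * q ^ 1) with (q ^ 2) by reflexivity. rewrite pow_1. reflexivity.
  - rewrite tech5, IH, tele_step by (apply pow_S_range, Hq).
    replace (q * q ^ S (S N)) with (q ^ S (S (S N))) by reflexivity. ring.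
Qed.

(* Since tele_potential q = 0 and tele_potential w -> -L(q) as w -> 0,
   sum_{k >= 1} L(T(q^k)) = L(q). *)
Lemma tele_series : infinite_sum (fun k => RogersL (tele_term (q ^ S k))) (RogersL q).
Proof.
  set (w := fun N : nat => q ^ S (S N)).
  assert (Hw : forall N, 0 < w N < 1) by (intros N; apply pow_S_range, Hq).
  assert (Hc : Un_cv w 0) by (apply (Un_cv_shift (fun k => q ^ S k)), pow_S_cv0, Hq).
  assert (Label_l := RogersL_cv0 (fun k => abel (w k) q)
                    (fun k => abel_range _ _ (Hw k) Hq) (abel_cv_left w q Hc)).
  assert (Label_r := continuity_seq RogersL _ _ (RogersL_continuity q Hq)
                       (abel_cv_right w q Hc)).
  assert (Hlim := CV_minus _ _ _ _ (Un_cv_const 0) (CV_minus _ _ _ _ Label_l Label_r)).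
  replace (RogersL q) with (0 - (0 - RogersL q)) by ring.
  intros e He. destruct (Hlim e He) as [N HN].
  exists N. intros k Hk.
  rewrite tele_partial_sum.
  replace (tele_potential q) with 0 by (unfold tele_potential; ring).
  apply HN, Hk.
Qed.
End Telescope.

Lemma floorR_eq (y : R) (z : Z) : IZR z <= y < IZR z + 1 -> floorR y = z.
Proof.
  intros [H1 H2]. unfold floorR. rewrite <- (up_tech y z H1).
  - lia.
  - rewrite plus_IZR. exact H2.
Qed.

Lemma cf_hk_fst (u : R) (i : nat) : fst (cf_hk u (S i)) =
  (snd (fst (cf_hk u i)), (cf_coef u i * snd (fst (cf_hk u i)) + fst (fst (cf_hk u i)))%Z).
Proof. simpl. destruct (cf_hk u i) as [[h2 h1] [k2 k1]]. reflexivity. Qed.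

Fixpoint lucasU (a : Z) (j : nat) : Z :=
  match j with
  | O => 0
  | S i => match i with
           | O => 1
           | S l => 2 * a * lucasU a i - lucasU a l
           end
  end%Z.

(* If 2a x = 1 + x^2 (x = 1/u with u + 1/u = 2a), then
   U_{j+1} x^j (1 - x^2) = 1 - x^(2j+2), i.e. U_{j+1} = (u^(j+1) - u^-(j+1))/(u - 1/u). *)
Lemma lucasU_closed (a : Z) (x : R) : 2 * IZR a * x = 1 + x ^ 2 -> forall j,
  IZR (lucasU a (S j)) * x ^ j * (1 - x ^ 2) = 1 - (x ^ 2) ^ S j.
Proof.
  intros Hx.
  enough (H : forall j, IZR (lucasU a (S j)) * x ^ j * (1 - x ^ 2) = 1 - (x ^ 2) ^ S j /\
             IZR (lucasU a (S (S j))) * x ^ S j * (1 - x ^ 2) = 1 - (x ^ 2) ^ S (S j))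
    by (intros j; apply H).
  induction j as [|j [IH1 IH2]].
  - cbn [lucasU]. rewrite minus_IZR, !mult_IZR.
    split; [simpl; ring|].
    transitivity ((2 * IZR a * x) * (1 - x ^ 2)); [simpl; ring|].
    rewrite Hx. ring.
  - split; [exact IH2|].
    change (lucasU a (S (S (S j)))) with (2 * a * lucasU a (S (S j)) - lucasU a (S j))%Z.
    rewrite minus_IZR, !mult_IZR.
    transitivity (2 * IZR a * x * (IZR (lucasU a (S (S j))) * x ^ S j * (1 - x ^ 2))
                  - x ^ 2 * (IZR (lucasU a (S j)) * x ^ j * (1 - x ^ 2))).
    + simpl. ring.
    + rewrite IH1, IH2, Hx. simpl. ring.
Qed.

Lemma cf_rem_S (u : R) (i : nat) :
  cf_rem u (S i) = / (cf_rem u i - IZR (floorR (cf_rem u i))).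
Proof. reflexivity. Qed.

Section PellContinuedFraction.
Variables (u : R) (a : Z).
Hypothesis Hu : 2 < u.
Hypothesis Hux : u + / u = 2 * IZR a.

(* The complete quotients of u alternate between v = 1/(1 - 1/u) and u - 1. *)
Definition cf_v : R := / (1 - / u).

(* Since u > 2, 0 < 1/u < 1/2; this locates u, v and u - 1 between integers. *)
Lemma inv_u_range : 0 < / u < / 2.
Proof. split; [apply Rinv_0_lt_compat | apply Rinv_lt_contravar]; lra. Qed.

Lemma floor_u : floorR u = (2 * a - 1)%Z.
Proof.
  pose proof inv_u_range. apply floorR_eq. rewrite minus_IZR, mult_IZR. simpl. lra.
Qed.

Lemma floor_v : floorR cf_v = 1%Z.
Proof.
  pose proof inv_u_range. apply floorR_eq. unfold cf_v. simpl. split.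
  - rewrite <- Rinv_1. apply Rinv_le_contravar; lra.
  - apply (Rmult_lt_reg_r (1 - / u)); [lra|]. rewrite Rinv_l by lra. lra.
Qed.

Lemma floor_u_minus_1 : floorR (u - 1) = (2 * a - 2)%Z.
Proof.
  pose proof inv_u_range. apply floorR_eq. rewrite minus_IZR, mult_IZR. simpl. lra.
Qed.

Lemma cf_rem_period (j : nat) :
  cf_rem u (S (2 * j)) = cf_v /\ cf_rem u (S (S (2 * j))) = u - 1.
Proof.
  pose proof inv_u_range.
  assert (Hv : cf_rem u 1 = cf_v).
  { cbn [cf_rem]. rewrite floor_u, minus_IZR, mult_IZR. unfold cf_v. f_equal. simpl. lra. }
  assert (Hv_next : / (cf_v - IZR (floorR cf_v)) = u - 1).
  { rewrite floor_v. unfold cf_v. simpl. field. repeat split; lra. }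
  assert (Hu1_next : / (u - 1 - IZR (floorR (u - 1))) = cf_v).
  { rewrite floor_u_minus_1, minus_IZR, mult_IZR. unfold cf_v. f_equal. simpl. lra. }
  induction j as [|j [_ IH2]].
  - change (2 * 0)%nat with 0%nat.
    split; [exact Hv|]. rewrite (cf_rem_S u 1), Hv. exact Hv_next.
  - replace (2 * S j)%nat with (S (S (2 * j))) by lia.
    assert (E : cf_rem u (S (S (S (2 * j)))) = cf_v) by (rewrite cf_rem_S, IH2; exact Hu1_next).
    split; [exact E|]. rewrite cf_rem_S, E. exact Hv_next.
Qed.

Lemma cf_coef_0 : cf_coef u 0 = (2 * a - 1)%Z.
Proof. apply floor_u. Qed.

Lemma cf_coef_odd (j : nat) : cf_coef u (S (2 * j)) = 1%Z.
Proof. unfold cf_coef. rewrite (proj1 (cf_rem_period j)). apply floor_v. Qed.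

Lemma cf_coef_even (j : nat) : cf_coef u (S (S (2 * j))) = (2 * a - 2)%Z.
Proof. unfold cf_coef. rewrite (proj2 (cf_rem_period j)). apply floor_u_minus_1. Qed.

Lemma cf_h_pair (k : nat) :
  fst (cf_hk u (S (S (2 * k)))) = ((lucasU a (S (S k)) - lucasU a (S k))%Z, lucasU a (S (S k))).
Proof.
  induction k as [|k IH].
  - change (2 * 0)%nat with 0%nat.
    rewrite !cf_hk_fst. cbn [cf_hk fst snd]. rewrite cf_coef_0.
    rewrite (cf_coef_odd 0 : cf_coef u 1 = 1%Z). cbn [lucasU]. f_equal; ring.
  - replace (2 * S k)%nat with (S (S (2 * k))) by lia.
    rewrite (cf_hk_fst u (S (S (S (2 * k))))), (cf_hk_fst u (S (S (2 * k)))), IH.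
    cbn [fst snd]. rewrite cf_coef_even.
    replace (S (S (S (2 * k)))) with (S (2 * S k)) by lia.
    rewrite cf_coef_odd.
    change (lucasU a (S (S (S k)))) with (2 * a * lucasU a (S (S k)) - lucasU a (S k))%Z.
    f_equal; ring.
Qed.

Lemma cf_h_odd (k : nat) : cf_h u (2 * k + 1) = lucasU a (S (S k)).
Proof.
  unfold cf_h. replace (S (2 * k + 1)) with (S (S (2 * k))) by lia.
  rewrite cf_h_pair. reflexivity.
Qed.
End PellContinuedFraction.

(* With q = x^2, the k-th term T(q^(k+1)) of the telescoping series is 1/U_{k+2}^2,
   since U_{k+2} x^(k+1) (1 - x^2) = 1 - x^(2k+4). *)
Lemma tele_term_lucasU (a : Z) (x : R) (k : nat) :
  0 < x < 1 -> 2 * IZR a * x = 1 + x ^ 2 ->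
  tele_term (x ^ 2) ((x ^ 2) ^ S k) = / IZR (lucasU a (S (S k))) ^ 2.
Proof.
  intros Hx Hax.
  pose proof (lucasU_closed a x Hax (S k)) as HU.
  set (U := IZR (lucasU a (S (S k)))) in *.
  assert (Hxk : 0 < x ^ S k) by (apply pow_lt; lra).
  assert (Hsq : (x ^ 2) ^ S k = (x ^ S k) ^ 2)
    by (rewrite <- !pow_mult, Nat.mul_comm; reflexivity).
  assert (Hden : 1 - x ^ 2 * (x ^ 2) ^ S k = U * x ^ S k * (1 - x ^ 2))
    by (rewrite HU; reflexivity).
  assert (Hpos : 0 < 1 - (x ^ 2) ^ S (S k)).
  { pose proof (pow_S_range (x ^ 2) (S k) ltac:(split; nra)). lra. }
  assert (HU0 : U <> 0) by (intros E; rewrite E in HU; lra).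
  unfold tele_term. rewrite Hden, Hsq. field. repeat split; nra.
Qed.

Lemma pell_unit (n a b : Z) :
  (2 <= n)%Z -> (0 < a)%Z -> (0 < b)%Z -> (a * a - n * (b * b))%Z = 1%Z ->
  2 < IZR a + IZR b * sqrt (IZR n) /\
  (IZR a + IZR b * sqrt (IZR n)) + / (IZR a + IZR b * sqrt (IZR n)) = 2 * IZR a.
Proof.
  intros hn ha hb hpell.
  apply IZR_le in hn. apply (f_equal IZR) in hpell.
  rewrite minus_IZR, !mult_IZR in hpell.
  assert (Ha : 1 <= IZR a) by (apply IZR_le; lia).
  assert (Hb : 1 <= IZR b) by (apply IZR_le; lia).
  set (r := sqrt (IZR n)).
  assert (Hrr : r * r = IZR n) by (apply sqrt_sqrt; lra).
  assert (Hr : 1 < r) by (pose proof (sqrt_pos (IZR n)); unfold r in *; nra).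
  assert (Hu : 2 < IZR a + IZR b * r) by nra.
  split; [exact Hu|].
  replace (/ (IZR a + IZR b * r)) with (IZR a - IZR b * r); [ring|].
  field_simplify_eq; [|lra]. rewrite <- Hrr in hpell. nra.
Qed.

(* The series is the telescoping series of [tele_series] at q = 1/u^2, term by term
   via [cf_h_odd] and [tele_term_lucasU]. *)
Theorem theorem2 (n a b : Z)
  (hn : (2 <= n)%Z)
  (hns : ~ (exists m : Z, (m * m)%Z = n))
  (ha : (0 < a)%Z) (hb : (0 < b)%Z)
  (hpell : (a * a - n * (b * b))%Z = 1%Z) :
  let u := IZR a + IZR b * sqrt (IZR n) in
  infinite_sum
    (fun k : nat => RogersL (/ (IZR (cf_h u (2 * k + 1))) ^ 2))
    (RogersL (/ u ^ 2)).
Proof.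
  intros u.
  destruct (pell_unit n a b hn ha hb hpell) as [Hu Hux]. fold u in Hu, Hux.
  set (x := / u).
  assert (Hx : 0 < x < 1).
  { split; [apply Rinv_0_lt_compat | rewrite <- Rinv_1; apply Rinv_lt_contravar]; lra. }
  assert (Hax : 2 * IZR a * x = 1 + x ^ 2) by (rewrite <- Hux; unfold x; field; lra).
  rewrite <- pow_inv. fold x.
  apply is_series_Reals.
  eapply is_series_ext; [|apply is_series_Reals, (tele_series (x ^ 2)); split; nra].
  intros k. cbv beta.
  rewrite (cf_h_odd u a Hu Hux), (tele_term_lucasU a x k Hx Hax).
  reflexivity.
Qed.
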